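(* Let $G$ be a finite group and let $x_1, \dots, x_n$ be representatives of the distinct rational classes of $G$. Then $$|\mathrm{Solv}(G)| \leq \sum_{i=1}^n [G : N_G(\langle x_i \rangle)].$$
   Context: For a finite group $G$ and $x \in G$, the solvabilizer of $x$ in $G$ is $\mathrm{Sol}_G(x) = \{y \in G : \langle x, y \rangle \text{ is solvable}\}$; $\mathrm{Solv}(G) = \{\mathrm{Sol}_G(x) : x \in G\}$ is the set of distinct solvabilizers. The rational class of $x \in G$ is the union of the conjugacy classes $(x^i)^G$ over all integers $i$ with $\gcd(|x|, i) = 1$. *)

From mathcomp Require Import all_boot all_fingroup all_solvable.
Set Implicit Arguments. Unset Strict Implicit. Unset Printing Implicit Defensive.
Local Open Scope group_scope.

Definition Sol (gT : finGroupType) (G : {set gT}) (x : gT) : {set gT} :=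
  [set y in G | solvable <<[set x; y]>>].

Definition Solv (gT : finGroupType) (G : {set gT}) : {set {set gT}} :=
  [set Sol G x | x in G].

(* Rational class of x in G: union of the classes (x^i)^G, gcd(#[x], i) = 1.
   Since x^i depends only on i mod #[x], it suffices to take 0 <= i < #[x]. *)
Definition ratclass (gT : finGroupType) (G : {set gT}) (x : gT) : {set gT} :=
  \bigcup_(i < #[x] | coprime #[x] i) ((x ^+ i) ^: G).

(** The solvabilizer of y depends only on the cyclic subgroup <y>.  If y lies
    in the rational class of x, then y is conjugate to a generator of <x>, so
    <y> is a G-conjugate of <x>.  Hence the solvabilizers of the elements of
    a rational class are indexed by the conjugates of <x>, of which there are
    [G : N_G(<x>)]; summing over the rational classes bounds |Solv(G)|. *)
From mathcomp Require Import all_boot all_fingroup all_solvable.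
Set Implicit Arguments. Unset Strict Implicit. Unset Printing Implicit Defensive.
Local Open Scope group_scope.

Lemma leq_card_bigcup (T : finType) (I : Type) (r : seq I) (P : pred I)
    (F : I -> {set T}) :
  #|\bigcup_(i <- r | P i) F i| <= \sum_(i <- r | P i) #|F i|.
Proof.
elim/big_rec2: _ => [|i n U _ leUn]; first by rewrite cards0.
by rewrite (leq_trans (leq_card_setU _ _).1) ?leq_add2l.
Qed.

Lemma gen_set2 (gT : finGroupType) (y z : gT) :
  <<[set y; z]>> = <[y]> <*> <[z]>.
Proof. by rewrite joing_idl joing_idr. Qed.

Section Solvabilizer.

Variables (gT : finGroupType) (G : {group gT}).

Definition cycle_Sol (C : {set gT}) : {set gT} :=
  [set z in G | solvable (C <*> <[z]>)].

Lemma Sol_cycle (y : gT) : Sol G y = cycle_Sol <[y]>.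
Proof. by apply/setP => z; rewrite !inE gen_set2. Qed.

Lemma ratclass_cycle_orbit (x y : gT) :
  y \in ratclass G x -> <[y]> \in orbit 'Js G <[x]>.
Proof.
case/bigcupP => i coprime_i /imsetP[g Gg ->].
have gen_xi : <[x ^+ i]> = <[x]>.
  by apply/esym/eqP; rewrite -/(generator _ _) generator_coprime.
by apply/imsetP; exists g; rewrite // cycleJ gen_xi.
Qed.

Lemma card_Sol_ratclass (x : gT) :
  #|Sol G @: ratclass G x| <= #|G : 'N_G(<[x]>)|.
Proof.
have sub_orbit : Sol G @: ratclass G x \subset cycle_Sol @: orbit 'Js G <[x]>.
  apply/subsetP => _ /imsetP[y xy ->].
  by rewrite Sol_cycle imset_f ?ratclass_cycle_orbit.
apply: leq_trans (subset_leq_card sub_orbit) _.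
by rewrite (leq_trans (leq_imset_card _ _)) // card_orbit astab1Js.
Qed.

End Solvabilizer.

Theorem corollary6p3 (gT : finGroupType) (G : {group gT}) (xs : seq gT) :
  {subset xs <= G} ->
  uniq [seq ratclass G x | x <- xs] ->
  (forall y, y \in G -> exists2 x, x \in xs & y \in ratclass G x) ->
  #|Solv G| <= \sum_(x <- xs) #|G : 'N_G(<[x]>)|.
Proof.
move=> _ _ cover_xs.
have Solv_cover : Solv G \subset \bigcup_(x <- xs) Sol G @: ratclass G x.
  apply/subsetP => _ /imsetP[y Gy ->].
  have [x xs_x xy] := cover_xs y Gy.
  by rewrite bigcup_seq; apply/bigcupP; exists x; rewrite ?imset_f.
apply: leq_trans (subset_leq_card Solv_cover) _.
apply: leq_trans (leq_card_bigcup _ _ _) _.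
by apply: leq_sum => x _; apply: card_Sol_ratclass.
Qed.
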